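(* Let $\chi>0$, $\phi\in C^1(\mathbb{R})$ with $\phi'>0$, $\phi(0)>0$, and $g\in C^1([0,\infty))$ positive with exactly one $\beta>0$ such that $g'<0$ on $[0,\beta)$ and $g'>0$ on $(\beta,\infty)$. Let $g(\beta)<u_-<\min\{g(0),\lim_{V\to\infty}g(V)\}$, $0<v_+<\beta<v_-$ with $g(v_\pm)=u_-$, $Q(V)=(v_--V)^2\inf_{z\in(V,v_-]}g'(z)$ on $(\beta,v_-)$, $s_2:=\chi\big(1-\frac{u_-}{g(0)}\big)^{-1}\big[\phi\big(\sqrt{\frac{1}{v_--\beta}\int_\beta^{v_-}Q}\big)-\frac{u_-\phi(0)}{g(0)}\big]$, $B(V)=\frac{s}{\chi}+\frac{u_-}{g(V)}\big(\phi(0)-\frac{s}{\chi}\big)$, $h(W)=\frac{u_-(\chi\phi(0)-s)}{\chi\phi(W)-s}$. Suppose $\chi\phi(0)<s<s_2$, let $v^*\in(\beta,v_-)$ satisfy $0<\phi^{-1}(B(0))<\sqrt{Q(v^* )}$, and choose $w^*$ with $\phi^{-1}(B(0))<w^*<\sqrt{Q(v^* )}$. Then the negative eigenvalue $\lambda_2(E_-)=\frac{-h'(0)-\sqrt{h'(0)^2+4g'(v_-)}}{2}$ of the linearization of $V'=W$, $W'=-h(W)+g(V)$ at $E_-=(v_-,0)$ satisfies $\lambda_2(E_-)<-\frac{w^*}{v_--v^*}<0$. *)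

From Stdlib Require Import Reals.
From Coquelicot Require Import Coquelicot.
Open Scope R_scope.

Definition inf_deriv (dg : R -> R) (V vm : R) : R :=
  real (Glb_Rbar (fun y => exists z, V < z <= vm /\ y = dg z)).

Definition Qfun (dg : R -> R) (vm V : R) : R :=
  (vm - V) ^ 2 * inf_deriv dg V vm.

Definition s2 (chi : R) (phi g dg : R -> R) (um beta vm : R) : R :=
  chi * / (1 - um / g 0) *
  (phi (sqrt (/ (vm - beta) * RInt (Qfun dg vm) beta vm)) - um * phi 0 / g 0).

Definition Bfun (chi : R) (phi g : R -> R) (um s V : R) : R :=
  s / chi + um / g V * (phi 0 - s / chi).

Definition hfun (chi : R) (phi : R -> R) (um s W : R) : R :=
  um * (chi * phi 0 - s) / (chi * phi W - s).

Definition lambda2 (chi : R) (phi dg : R -> R) (um s vm : R) : R :=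
  let hp := Derive (hfun chi phi um s) 0 in
  (- hp - sqrt (hp ^ 2 + 4 * dg vm)) / 2.

(** The slope [h'(0)] is positive because [phi] is increasing and [chi phi(0) < s].
    Since [wstar < sqrt (Q vstar)], the number [k = wstar / (v_- - vstar)] satisfies
    [k^2 < inf g' <= g'(v_-)]. Hence the characteristic polynomial
    [x^2 + h'(0) x - g'(v_-)] of the linearization at [E_-] is negative at [-k],
    so [-k] lies strictly between its two roots, in particular above [lambda_2]. *)

From Stdlib Require Import Reals Lra.
From Coquelicot Require Import Coquelicot.
Open Scope R_scope.

Lemma is_derive_hfun (chi : R) (phi : R -> R) (dphiW um s W : R) :
  is_derive phi W dphiW -> chi * phi W - s <> 0 ->
  is_derive (hfun chi phi um s) W
    (um * (chi * phi 0 - s) * (- (chi * dphiW) / (chi * phi W - s) ^ 2)).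
Proof.
  intros Hphi Hne.
  assert (Hden : is_derive (fun x => chi * phi x - s) W (chi * dphiW)).
  { replace (chi * dphiW) with (chi * dphiW - 0) by ring.
    apply (@is_derive_minus R_AbsRing R_NormedModule).
    - exact (is_derive_scal _ _ chi _ Hphi).
    - apply (@is_derive_const R_AbsRing R_NormedModule). }
  exact (is_derive_scal _ _ _ _ (is_derive_inv _ _ _ Hden Hne)).
Qed.

Lemma Derive_hfun0_pos (chi : R) (phi : R -> R) (dphi0 um s : R) :
  0 < chi -> 0 < um -> is_derive phi 0 dphi0 -> 0 < dphi0 -> chi * phi 0 < s ->
  0 < Derive (hfun chi phi um s) 0.
Proof.
  intros Hchi Hum Hphi Hdphi Hs.
  rewrite (is_derive_unique _ _ _ (is_derive_hfun chi phi dphi0 um s 0 Hphi ltac:(lra))).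
  replace (um * (chi * phi 0 - s) * (- (chi * dphi0) / (chi * phi 0 - s) ^ 2))
    with (um * chi * dphi0 / (s - chi * phi 0)) by (field; lra).
  apply Rdiv_lt_0_compat; [apply Rmult_lt_0_compat; [apply Rmult_lt_0_compat|] | ]; lra.
Qed.

(* Positivity rules out the case [Glb_Rbar = -oo], where [real] returns the junk value [0]. *)
Lemma inf_deriv_le (dg : R -> R) (V vm z : R) :
  V < z <= vm -> 0 < inf_deriv dg V vm -> inf_deriv dg V vm <= dg z.
Proof.
  unfold inf_deriv; intros Hz Hpos.
  destruct (Glb_Rbar_correct (fun y => exists z, V < z <= vm /\ y = dg z)) as [Hlb _].
  specialize (Hlb (dg z) (ex_intro _ z (conj Hz eq_refl))).
  destruct (Glb_Rbar _) as [r | |]; simpl in *; lra.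
Qed.

Lemma sqr_lt_inf_deriv (dg : R -> R) (V vm w : R) :
  V < vm -> 0 <= w < sqrt (Qfun dg vm V) ->
  (w / (vm - V)) ^ 2 < inf_deriv dg V vm.
Proof.
  intros HV Hw.
  assert (HQ : 0 < Qfun dg vm V).
  { destruct (Rle_or_lt (Qfun dg vm V) 0) as [Hle | Hlt]; [|exact Hlt].
    rewrite (sqrt_neg_0 _ Hle) in Hw; lra. }
  assert (Hw2 : w * w < Qfun dg vm V).
  { rewrite <- (sqrt_sqrt (Qfun dg vm V)) by lra.
    apply Rmult_le_0_lt_compat; lra. }
  unfold Qfun in Hw2.
  apply (Rmult_lt_reg_r ((vm - V) ^ 2)); [apply pow_lt; lra|].
  replace ((w / (vm - V)) ^ 2 * (vm - V) ^ 2) with (w * w) by (field; lra).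
  lra.
Qed.

Lemma smaller_root_lt (b d k : R) :
  0 <= b -> 0 < k -> k ^ 2 < d -> (- b - sqrt (b ^ 2 + 4 * d)) / 2 < - k.
Proof.
  intros Hb Hk Hd.
  assert (Hsq : (2 * k - b) ^ 2 < b ^ 2 + 4 * d).
  { assert (0 <= k * b) by (apply Rmult_le_pos; lra). nra. }
  assert (2 * k - b < sqrt (b ^ 2 + 4 * d)).
  { apply Rle_lt_trans with (Rabs (2 * k - b)); [apply Rle_abs|].
    rewrite <- sqrt_Rsqr_abs.
    apply sqrt_lt_1_alt; split; [apply Rle_0_sqr|].
    unfold Rsqr; simpl in Hsq; lra. }
  lra.
Qed.
Theorem proposition2p11
  (chi : R) (phi dphi g dg : R -> R)
  (beta um vp vm s vstar wstar winv : R) (Lg : Rbar)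
  (* chi > 0 *)
  (Hchi : 0 < chi)
  (* phi in C^1(R), phi' > 0, phi(0) > 0 *)
  (Hphi_der : forall x, is_derive phi x (dphi x))
  (Hdphi_cont : forall x, continuous dphi x)
  (Hdphi_pos : forall x, 0 < dphi x)
  (Hphi0 : 0 < phi 0)
  (* g in C^1([0,oo)) with derivative dg (one-sided at 0), g > 0 *)
  (Hg_der : forall x, 0 < x -> is_derive g x (dg x))
  (Hg_der0 : filterlim (fun x => (g x - g 0) / x) (at_right 0) (locally (dg 0)))
  (Hdg_cont : forall x, 0 <= x ->
     filterlim dg (within (fun y => 0 <= y) (locally x)) (locally (dg x)))
  (Hg_pos : forall x, 0 <= x -> 0 < g x)
  (* beta > 0: g' < 0 on [0,beta), g' > 0 on (beta,oo) *)
  (Hbeta : 0 < beta)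
  (Hdg_neg : forall x, 0 <= x < beta -> dg x < 0)
  (Hdg_pos : forall x, beta < x -> 0 < dg x)
  (* Lg = lim_{V -> oo} g(V) (possibly +oo) *)
  (HLg : is_lim g p_infty Lg)
  (* g(beta) < u_- < min{g(0), lim g} *)
  (Hum1 : g beta < um) (Hum2 : um < g 0) (Hum3 : Rbar_lt (Finite um) Lg)
  (* 0 < v_+ < beta < v_-, g(v_+-) = u_- *)
  (Hvp : 0 < vp < beta) (Hvm : beta < vm)
  (Hgvp : g vp = um) (Hgvm : g vm = um)
  (* chi phi(0) < s < s_2 *)
  (Hs1 : chi * phi 0 < s) (Hs2 : s < s2 chi phi g dg um beta vm)
  (* vstar in (beta, v_-), winv = phi^{-1}(B(0)), 0 < winv < sqrt(Q(vstar)) *)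
  (Hvstar : beta < vstar < vm)
  (Hwinv : phi winv = Bfun chi phi g um s 0)
  (Hwinv_bd : 0 < winv < sqrt (Qfun dg vm vstar))
  (* phi^{-1}(B(0)) < wstar < sqrt(Q(vstar)) *)
  (Hwstar : winv < wstar < sqrt (Qfun dg vm vstar)) :
  lambda2 chi phi dg um s vm < - (wstar / (vm - vstar)) /\
  - (wstar / (vm - vstar)) < 0.
Proof.
  assert (Hum0 : 0 < um) by (pose proof (Hg_pos beta (Rlt_le _ _ Hbeta)); lra).
  pose proof (Derive_hfun0_pos chi phi (dphi 0) um s
                Hchi Hum0 (Hphi_der 0) (Hdphi_pos 0) Hs1) as Hhp.
  assert (Hk : 0 < wstar / (vm - vstar)) by (apply Rdiv_lt_0_compat; lra).
  assert (Hinf : (wstar / (vm - vstar)) ^ 2 < inf_deriv dg vstar vm).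
  { apply sqr_lt_inf_deriv; lra. }
  assert (Hinf_le : inf_deriv dg vstar vm <= dg vm).
  { apply inf_deriv_le; [lra|].
    apply Rle_lt_trans with ((wstar / (vm - vstar)) ^ 2); [apply pow2_ge_0 | exact Hinf]. }
  split; [|lra].
  apply smaller_root_lt; lra.
Qed.
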